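(* Let $\mathcal{H}$ be an infinite-dimensional separable Hilbert space with inner product $\langle\cdot,\cdot\rangle$ (linear in the second argument), $\mathcal{D}\subseteq\mathcal{H}$ a dense subspace, $\{e_n\}_{n\ge0}$ an orthonormal basis of $\mathcal{H}$ with $e_n\in\mathcal{D}$, and $R$ a bounded operator with bounded inverse such that $\mathcal{D}$ is stable under $R,R^\dagger,R^{-1},(R^{-1})^\dagger$. Put $\varphi_n=Re_n$, $\psi_n=(R^{-1})^\dagger e_n$. Let $H$ be an operator with $D(H)\supseteq\mathcal{D}$, $D(H^\dagger)\supseteq\mathcal{D}$, $H\mathcal{D}\subseteq\mathcal{D}$, and suppose $H$ is $(\varphi,\psi)$-tridiagonal, i.e. there are complex sequences $\{b_n\},\{a_n\},\{b_n'\}$ with $\langle\psi_n,H\varphi_m\rangle=b_n\delta_{n,m+1}+a_n\delta_{n,m}+b_n'\delta_{n,m-1}$ for all $n,m\ge0$; set $b'_{-1}=0$. Let $H_0:=R^{-1}HR$. If $H_0=H_0^\dagger$, then $a_n\in\mathbb{R}$ for all $n$ and $b_m=\overline{b'_{m-1}}$ for all $m\ge0$. Conversely, if $a_m\in\mathbb{R}$ and $b_m=\overline{b'_{m-1}}$ for all $m\ge0$, then $\langle f,H_0g\rangle=\langle H_0f,g\rangle$ for all $f,g$ in the linear span $\mathcal{E}$ of $\{e_n\}$. *)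

From HB Require Import structures.
From mathcomp Require Import all_boot all_order all_algebra.
From mathcomp Require Import all_reals.
From mathcomp Require Export complex.
Set Implicit Arguments. Unset Strict Implicit. Unset Printing Implicit Defensive.
Import Order.TTheory GRing.Theory Num.Theory.
Local Open Scope ring_scope.

Section Hilbert.
Variables (R : realType) (V : lmodType R[i]) (ip : V -> V -> R[i]).

Definition inner_product : Prop :=
  [/\ forall (a : R[i]) f g h, ip f (a *: g + h) = a * ip f g + ip f h,
      forall f g, ip g f = (ip f g)^* &
      forall f, f != 0 -> 0 < ip f f].

Definition dist2 (f g : V) : R[i] := ip (f - g) (f - g).

Definition complete_space : Prop :=
  forall u : nat -> V,
    (forall eps : R[i], 0 < eps -> exists N, forall m n, (N <= m)%N -> (N <= n)%N ->
        dist2 (u m) (u n) < eps) ->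
    exists l, forall eps : R[i], 0 < eps -> exists N, forall n, (N <= n)%N ->
        dist2 (u n) l < eps.

Definition hilbert_space : Prop := inner_product /\ complete_space.

Definition orthonormal_basis (e : nat -> V) : Prop :=
  (forall n m, ip (e n) (e m) = (n == m)%:R) /\
  (forall f, (forall n, ip (e n) f = 0) -> f = 0).

Definition subspace (D : V -> Prop) : Prop :=
  [/\ D 0, forall f g, D f -> D g -> D (f + g) & forall (a : R[i]) f, D f -> D (a *: f)].

Definition dense (D : V -> Prop) : Prop :=
  forall f (eps : R[i]), 0 < eps -> exists d, D d /\ dist2 f d < eps.

Definition bounded_op (T : V -> V) : Prop :=
  exists c : R[i], forall f, ip (T f) (T f) <= c * ip f f.

Definition is_bounded_adjoint (T Td : V -> V) : Prop :=
  forall f g, ip (Td f) g = ip f (T g).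

Definition linear_on (domA : V -> Prop) (A : V -> V) : Prop :=
  subspace domA /\
  (forall (a : R[i]) f g, domA f -> domA g -> A (a *: f + g) = a *: A f + A g).

Definition adj_dom (domA : V -> Prop) (A : V -> V) (g : V) : Prop :=
  exists h, forall f, domA f -> ip g (A f) = ip h f.

Definition self_adjoint (domA : V -> Prop) (A : V -> V) : Prop :=
  (forall g, domA g <-> adj_dom domA A g) /\
  (forall f g, domA f -> domA g -> ip g (A f) = ip (A g) f).

Definition in_span (e : nat -> V) (f : V) : Prop :=
  exists (n : nat) (c : nat -> R[i]), f = \sum_(k < n) c k *: e k.

End Hilbert.

From HB Require Import structures.
From mathcomp Require Import all_boot all_order all_algebra.
From mathcomp Require Import all_reals.
From mathcomp Require Import complex.
Import Order.TTheory GRing.Theory Num.Theory.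
Local Open Scope ring_scope.

(* In the basis {e_n}, the matrix of H0 = R^-1 H R is the (phi, psi)-matrix of
   H, because <e_n, R^-1 H R e_m> = <(R^-1)^dagger e_n, H R e_m>; hence it is
   the tridiagonal matrix with entries b, a, b'. Such a matrix is Hermitian
   exactly when a is real and b_(m+1) = conj b'_m. Self-adjointness of H0
   makes its matrix Hermitian, and conversely a Hermitian matrix makes H0
   symmetric on finite linear combinations of the e_n by sesquilinearity. *)

Section Tridiagonal.
Context {C : numClosedFieldType}.

Definition hermitian (t : nat -> nat -> C) : Prop :=
  forall n m, t n m = (t m n)^*.

Definition tridiag (b a b' : nat -> C) (n m : nat) : C :=
  (if n == m.+1 then b n else 0) + (if n == m then a n else 0)
  + (if n.+1 == m then b' n else 0).

Variables b a b' : nat -> C.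

Lemma tridiag_diag n : tridiag b a b' n n = a n.
Proof.
by rewrite /tridiag eqxx (ltn_eqF (ltnSn n)) (gtn_eqF (ltnSn n)) add0r addr0.
Qed.

Lemma tridiag_sub k : tridiag b a b' k.+1 k = b k.+1.
Proof.
rewrite /tridiag eqxx (gtn_eqF (ltnSn k)) (gtn_eqF (ltnW (ltnSn k.+1))).
by rewrite !addr0.
Qed.

Lemma tridiag_super k : tridiag b a b' k k.+1 = b' k.
Proof.
rewrite /tridiag eqxx (ltn_eqF (ltnSn k)) (ltn_eqF (ltnW (ltnSn k.+1))).
by rewrite !add0r.
Qed.

Lemma tridiag_hermitianP : b 0%N = 0 ->
  hermitian (tridiag b a b') <->
  (forall n, a n \is Num.real) /\
  (forall m, b m = if m is k.+1 then (b' k)^* else 0).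
Proof.
move=> b0; split=> [herm | [areal bsub] n m].
  split=> [n | [|k] //]; first by rewrite CrealE -tridiag_diag -herm.
  by rewrite -tridiag_sub herm tridiag_super.
rewrite /tridiag !rmorphD /= [RHS]addrC [X in _ = _ + X]addrC addrA.
congr (_ + _ + _).
- by rewrite [m.+1 == n]eq_sym; case: eqP => [->|_]; rewrite ?conjC0 // bsub.
- by rewrite [m == n]eq_sym; case: eqP => [->|_]; rewrite ?conjC0 // (CrealP _).
- rewrite [m == n.+1]eq_sym.
  by case: eqP => [<-|_]; rewrite ?conjC0 // bsub conjCK.
Qed.

End Tridiagonal.

Section InnerProduct.
Context {R : realType} {V : lmodType R[i]} {ip : V -> V -> R[i]}.
Hypothesis hip : inner_product ip.

Lemma ipC f g : ip g f = (ip f g)^*.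
Proof. by case: hip. Qed.

Lemma ip0r f : ip f 0 = 0.
Proof.
case: hip => ipl _ _; have := ipl (-1) f 0 0.
by rewrite scaler0 addr0 mulN1r addNr.
Qed.

Lemma ipDr f g h : ip f (g + h) = ip f g + ip f h.
Proof. by case: hip => ipl _ _; have := ipl 1 f g h; rewrite scale1r mul1r. Qed.

Lemma ipZr f a g : ip f (a *: g) = a * ip f g.
Proof. by case: hip => ipl _ _; rewrite -[a *: g]addr0 ipl ip0r addr0. Qed.

Lemma ip_sumr f n (c : nat -> R[i]) (y : nat -> V) :
  ip f (\sum_(k < n) c k *: y k) = \sum_(k < n) c k * ip f (y k).
Proof.
elim: n => [|n IH]; first by rewrite !big_ord0 ip0r.
by rewrite !big_ord_recr /= ipDr IH ipZr.
Qed.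

Lemma ip_suml f n (c : nat -> R[i]) (y : nat -> V) :
  ip (\sum_(k < n) c k *: y k) f = \sum_(k < n) (c k)^* * ip (y k) f.
Proof.
rewrite ipC ip_sumr rmorph_sum; apply: eq_bigr => k _.
by rewrite rmorphM /= -ipC.
Qed.

Lemma span_hermitian (e : nat -> V) (T : V -> V) :
  (forall n (c : nat -> R[i]),
     T (\sum_(k < n) c k *: e k) = \sum_(k < n) c k *: T (e k)) ->
  hermitian (fun n m => ip (e n) (T (e m))) ->
  forall f g, in_span e f -> in_span e g -> ip f (T g) = ip (T f) g.
Proof.
move=> T_sum herm f g [N [c ->]] [M [d ->]].
rewrite !T_sum (ip_suml _ _ c e) (ip_suml _ _ c (fun k => T (e k))).
apply: eq_bigr => k _; congr (_ * _).
rewrite (ip_sumr _ _ d e) (ip_sumr _ _ d (fun k => T (e k))).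
apply: eq_bigr => j _.
by rewrite herm -ipC.
Qed.

End InnerProduct.

Section LinearOn.
Context {R : realType} {V : lmodType R[i]} {domA : V -> Prop} {A : V -> V}.
Hypothesis hA : linear_on domA A.

Lemma subspace_sum n (c : nat -> R[i]) (y : nat -> V) :
  (forall k, domA (y k)) -> domA (\sum_(k < n) c k *: y k).
Proof.
case: hA => [[dom0 domD domZ] _] dom_y.
elim: n => [|n IH]; first by rewrite big_ord0.
by rewrite big_ord_recr /=; apply: domD => //; apply: domZ.
Qed.

Lemma linear_on0 : A 0 = 0.
Proof.
case: hA => [[dom0 _ _] Alin].
by have := Alin (-1) 0 0 dom0 dom0; rewrite scaler0 addr0 scaleN1r addNr.
Qed.

Lemma linear_on_sum n (c : nat -> R[i]) (y : nat -> V) :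
  (forall k, domA (y k)) ->
  A (\sum_(k < n) c k *: y k) = \sum_(k < n) c k *: A (y k).
Proof.
case: hA => _ Alin dom_y.
elim: n => [|n IH]; first by rewrite !big_ord0 linear_on0.
rewrite !big_ord_recr /= addrC [in RHS]addrC Alin ?IH //.
exact: subspace_sum.
Qed.

End LinearOn.

Theorem lemma3 (R : realType) (V : lmodType R[i]) (ip : V -> V -> R[i])
  (hV : hilbert_space ip)
  (D : V -> Prop) (hDsub : subspace D) (hDdense : dense ip D)
  (e : nat -> V) (he : orthonormal_basis ip e) (heD : forall n, D (e n))
  (Rop Rinv Rd Rinvd : {linear V -> V})
  (hRb : bounded_op ip Rop) (hRinvb : bounded_op ip Rinv)
  (hRK : cancel Rop Rinv) (hRinvK : cancel Rinv Rop)
  (hRd : is_bounded_adjoint ip Rop Rd) (hRinvd : is_bounded_adjoint ip Rinv Rinvd)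
  (hDR : forall f, D f -> D (Rop f)) (hDRd : forall f, D f -> D (Rd f))
  (hDRinv : forall f, D f -> D (Rinv f)) (hDRinvd : forall f, D f -> D (Rinvd f))
  (domH : V -> Prop) (H : V -> V) (hHlin : linear_on domH H)
  (hDdomH : forall f, D f -> domH f)
  (hDdomHd : forall f, D f -> adj_dom ip domH H f)
  (hHD : forall f, D f -> D (H f))
  (a b b' : nat -> R[i])
  (htri : forall n m, ip (Rinvd (e n)) (H (Rop (e m))) =
      (if n == m.+1 then b n else 0) + (if n == m then a n else 0)
      + (if n.+1 == m then b' n else 0))
  (hb0 : b 0%N = 0) :
  let domH0 := fun f => domH (Rop f) in
  let H0 := fun f => Rinv (H (Rop f)) in
  (self_adjoint ip domH0 H0 ->
     (forall n, a n \is Num.real) /\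
     (forall m, b m = if m is k.+1 then (b' k)^* else 0)) /\
  ((forall m, a m \is Num.real) ->
   (forall m, b m = if m is k.+1 then (b' k)^* else 0) ->
   forall f g, in_span e f -> in_span e g -> ip f (H0 g) = ip (H0 f) g).
Proof.
move=> domH0 H0.
have [hip _] := hV.
have dom_e k : domH0 (e k) by apply/hDdomH/hDR/heD.
have H0_mx n m : ip (e n) (H0 (e m)) = tridiag b a b' n m.
  by rewrite -hRinvd htri.
split=> [[_ H0_sym] | areal bsub].
  apply: (tridiag_hermitianP _ _ _ hb0).1 => n m.
  by rewrite -!H0_mx H0_sym ?dom_e // -(ipC hip).
apply: (span_hermitian hip) => [n c | n m]; last first.
  by rewrite !H0_mx; apply: (tridiag_hermitianP _ _ _ hb0).2.
rewrite /H0 linear_sum; under eq_bigr do rewrite linearZ.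
rewrite (linear_on_sum hHlin n c (fun k => Rop (e k))) ?linear_sum //.
by apply: eq_bigr => k _; rewrite linearZ.
Qed.
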